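(* With $Y$, $Y_\bullet$, $\mathbf u$, $\mathbf v$, $R^{\mathbf v}_{\mathbf u}$ as in the context, the valuation monoids and Newton–Okounkov bodies satisfy $$\Gamma^{\mathbf v}_{Y_\bullet}=\{\mathbf a\cdot\tilde R^{\mathbf v}_{\mathbf u}\mid \mathbf a\in\Gamma^{\mathbf u}_{Y_\bullet}\}\quad\text{and}\quad \Delta^{\mathbf u}_{Y_\bullet}\cdot R^{\mathbf v}_{\mathbf u}=\Delta^{\mathbf v}_{Y_\bullet}.$$
   Context: $\mathbb K$ is algebraically closed of characteristic $0$, $Y\subseteq\mathbb P(V)$ a projective variety of dimension $r$, $Y_\bullet:Y=Y_r\supseteq\cdots\supseteq Y_0=\{p\}$ a flag of subvarieties with $\dim Y_k=k$, each $Y_k$ smooth in codimension one so that $\mathcal O_{Y_{k-1},Y_k}$ is a DVR. For a sequence of parameters $\mathbf u=(u_r,\dots,u_1)$ ($u_k|_{Y_k}$ a uniformizer of $\mathcal O_{Y_{k-1},Y_k}$) the valuation $\nu^{\mathbf u}_{Y_\bullet}:\mathbb K(Y)\setminus\{0\}\to\mathbb Z^r$ is: $a_r$ = vanishing order of $f_r:=f$ along $Y_{r-1}$, $f_{k-1}:=(u_k^{-a_k}f_k)|_{Y_{k-1}}$ and $a_{k-1}$ = vanishing order of $f_{k-1}$ along $Y_{k-2}$; $\nu^{\mathbf u}_{Y_\bullet}(f)=(a_r,\dots,a_1)$ (row vector). For two sequences of parameters $\mathbf u,\mathbf v$, let $\lambda_k\in\mathcal O^\times_{Y_{k-1},Y_k}$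 with $u_k|_{Y_k}=\lambda_kv_k|_{Y_k}$, let $M^{\mathbf v}_{\mathbf u}$ have $k$-th row $\nu^{\mathbf v}_{Y^k_\bullet}(\lambda_k)$ (the valuation for the truncated flag $Y_k\supseteq\dots\supseteq Y_0$ with parameters $(v_k,\dots,v_1)$, padded with zeros in front to length $r$), and $R^{\mathbf v}_{\mathbf u}=\mathrm I_r+M^{\mathbf v}_{\mathbf u}$. $\tilde R^{\mathbf v}_{\mathbf u}\in\mathrm{Mat}_{r+1}(\mathbb Z)$ has first row and column equal to $(1,0,\dots,0)$ and lower right $r\times r$ block $R^{\mathbf v}_{\mathbf u}$. Let $\mathbb K[Y]=\bigoplus_m\mathbb K[Y]_m$ be the homogeneous coordinate ring and fix $\tau\in\mathbb K[Y]_1$ not vanishing at $p$. For a valuation $\nu$, $\Gamma_\nu:=\{0\}\cup\bigcup_{m\ge1}\{(m,\nu(f/\tau^m))\mid f\in\mathbb K[Y]_m\setminus\{0\}\}\subseteq\mathbb N\times\mathbb Z^r$ and $\Delta_\nu$ is the closure of the convex hull of $\{\mathbf a/m\mid(m,\mathbf a)\in\Gamma_\nu,m\ge1\}$ in $\mathbb R^r$. $\Gamma^{\mathbf u}_{Y_\bullet},\Delta^{\mathbf u}_{Y_\bullet}$ denote these for $\nu=\nu^{\mathbf u}_{Y_\bullet}$. *)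

From HB Require Import structures.
From mathcomp Require Import all_boot all_order all_algebra.
From mathcomp Require Import boolp classical_sets reals.
Unset Printing Implicit Defensive.
Import Order.TTheory GRing.Theory Num.Theory.
Local Open Scope ring_scope.
Local Open Scope classical_set_scope.

(* Abstract algebraic data of a flag  Y = Y_r ⊇ ... ⊇ Y_0 = {p}  with each
   O_{Y_k, Y_{k+1}} a DVR:
   - fld k        = the function field K(Y_k)               (k = 0..r)
   - ord k        = the normalized discrete valuation on K(Y_{k+1}) given by
                    vanishing order along Y_k                (k < r)
   - res k        = restriction  O_{Y_k,Y_{k+1}} -> K(Y_k), i.e. the residue
                    map of that DVR (values outside the DVR are irrelevant).
   The value [ord k 0] is irrelevant. *)
Record valued_flag (r : nat) := ValuedFlag {
  fld : nat -> fieldType;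
  ord : forall k, fld k.+1 -> int;
  res : forall k, fld k.+1 -> fld k;
  ord_mul : forall k, (k < r)%N -> forall x y : fld k.+1, x != 0 -> y != 0 ->
    ord k (x * y) = ord k x + ord k y;
  ord_add : forall k, (k < r)%N -> forall x y : fld k.+1,
    x != 0 -> y != 0 -> x + y != 0 -> Num.min (ord k x) (ord k y) <= ord k (x + y);
  ord_unif : forall k, (k < r)%N -> exists t : fld k.+1, t != 0 /\ ord k t = 1;
  res_add : forall k, (k < r)%N -> forall x y : fld k.+1,
    (x == 0) || (0 <= ord k x) -> (y == 0) || (0 <= ord k y) ->
    res k (x + y) = res k x + res k y;
  res_mul : forall k, (k < r)%N -> forall x y : fld k.+1,
    (x == 0) || (0 <= ord k x) -> (y == 0) || (0 <= ord k y) ->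
    res k (x * y) = res k x * res k y;
  res_one : forall k, (k < r)%N -> res k 1 = 1;
  res_ker : forall k, (k < r)%N -> forall x : fld k.+1,
    (x == 0) || (0 <= ord k x) -> (res k x == 0) = ((x == 0) || (0 < ord k x));
  res_surj : forall k, (k < r)%N -> forall z : fld k,
    exists x : fld k.+1, ((x == 0) || (0 <= ord k x)) /\ res k x = z
}.

Arguments fld {r} _ _.
Arguments ord {r} _ _ _.
Arguments res {r} _ _ _.

Section Defs.
Context {r : nat} (F : valued_flag r).

(* a sequence of parameters: u k is (the restriction to Y_{k+1} of) the
   paper's u_{k+1}, a uniformizer of O_{Y_k,Y_{k+1}} *)
Definition is_params (u : forall k, fld F k.+1) : Prop :=
  forall k, (k < r)%N -> u k != 0 /\ ord F k (u k) = 1.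

(* valuation of the truncated flag Y_k ⊇ ... ⊇ Y_0 : list (a_k, ..., a_1) *)
Fixpoint nuseq (u : forall k, fld F k.+1) (k : nat) : fld F k -> seq int :=
  match k return fld F k -> seq int with
  | 0 => fun _ => [::]
  | k'.+1 => fun f =>
      let a := ord F k' f in
      a :: nuseq u k' (res F k' (u k' ^ (- a) * f))
  end.

(* nu^u_{Y_bullet} : K(Y) \ 0 -> Z^r as a row vector (a_r, ..., a_1) *)
Definition nu (u : forall k, fld F k.+1) (f : fld F r) : 'rV[int]_r :=
  \row_(i < r) nth 0 (nuseq u r f) i.

(* lambda_k in K(Y_k) with u_k|_{Y_k} = lambda_k v_k|_{Y_k} *)
Definition lam (u v : forall k, fld F k.+1) (k : nat) : fld F k :=
  match k return fld F k with
  | 0 => 1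
  | k'.+1 => u k' / v k'
  end.

(* M^v_u : row i (0-based) corresponds to the coordinate a_k, k = r - i, and is
   nu^v_{Y^k_bullet}(lambda_k) padded with r - k zeros in front *)
Definition Mmat (u v : forall k, fld F k.+1) : 'M[int]_r :=
  \matrix_(i < r, j < r)
    let k := (r - i)%N in nth 0 (nseq (r - k) 0 ++ nuseq v k (lam u v k)) j.

Definition Rmat (u v : forall k, fld F k.+1) : 'M[int]_r := 1%:M + Mmat u v.

Definition Rtilde (u v : forall k, fld F k.+1) : 'M[int]_(1 + r) :=
  block_mx 1%:M 0 0 (Rmat u v).

(* S m = { f / tau^m | f in K[Y]_m }  (a subset of K(Y)) *)
Definition Gamma (u : forall k, fld F k.+1) (S : nat -> set (fld F r))
  : set 'rV[int]_(1 + r) :=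
  [set x | x = 0 \/ exists m (f : fld F r),
     [/\ (1 <= m)%N, S m f, f != 0 & x = row_mx ((m%:Z)%:M) (nu u f)]].

Definition conv_hull (R : realType) (A : set 'rV[R]_r) : set 'rV[R]_r :=
  [set x | exists n (w : 'I_n -> R) (p : 'I_n -> 'rV[R]_r),
     [/\ forall i, 0 <= w i, \sum_i w i = 1, forall i, A (p i)
       & x = \sum_i w i *: p i]].

Definition rclosure (R : realType) (A : set 'rV[R]_r) : set 'rV[R]_r :=
  [set x | forall e : R, 0 < e -> exists2 y, A y & forall i, `|x ord0 i - y ord0 i| < e].

Definition Delta (R : realType) (u : forall k, fld F k.+1) (S : nat -> set (fld F r))
  : set 'rV[R]_r :=
  @rclosure R (@conv_hull R
    [set ((lsubmx x ord0 ord0)%:~R)^-1 *: map_mx (fun z : int => z%:~R) (rsubmx x)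
      | x in [set x | Gamma u S x /\ 1 <= lsubmx x ord0 ord0]]).

End Defs.

From HB Require Import structures.
From mathcomp Require Import all_boot all_order all_algebra.
From mathcomp Require Import boolp classical_sets reals.
Import Order.TTheory GRing.Theory Num.Theory.
Local Open Scope ring_scope.
Local Open Scope classical_set_scope.

(* Replacing the parameter u_k by v_k = u_k / lambda_k, with lambda_k a unit of
   O_{Y_{k-1},Y_k}, leaves the vanishing order a_k unchanged and multiplies the next
   restriction by the residue of lambda_k^{a_k}.  Since the valuation of a truncated
   flag is a group homomorphism, this adds a_k times nu^v(lambda_k) to the lower
   coordinates, so by induction along the flag nu^v(f) = nu^u(f) R^v_u; this is the
   statement on Gamma.  As lambda_k has order 0, R^v_u is unitriangular, hence
   invertible over the reals, and an invertible linear map commutes with convex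
   hulls and closures, which gives the statement on Delta. *)

Section Valuation.
Context {r : nat} {F : valued_flag r} (k : nat).
Hypothesis kr : (k < r)%N.
Implicit Types x y : fld F k.+1.

Lemma ord1 : ord F k 1 = 0.
Proof. by apply: (addIr (ord F k 1)); rewrite -ord_mul ?oner_neq0 // mulr1 add0r. Qed.

Lemma ordV x : x != 0 -> ord F k x^-1 = - ord F k x.
Proof.
move=> x0; apply: (addrI (ord F k x)).
by rewrite -ord_mul ?invr_eq0 // mulfV // ord1 subrr.
Qed.

Lemma ordXn x n : x != 0 -> ord F k (x ^+ n) = n%:Z * ord F k x.
Proof.
move=> x0; elim: n => [|n IH]; first by rewrite expr0 ord1 mul0r.
by rewrite exprS ord_mul ?expf_neq0 // IH intS mulrDl mul1r.
Qed.

Lemma ordX x (z : int) : x != 0 -> ord F k (x ^ z) = z * ord F k x.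
Proof.
move=> x0; case: z => n; first exact: ordXn.
by rewrite /exprz ordV ?expf_neq0 // ordXn // NegzE mulNr.
Qed.

Lemma resM x y : 0 <= ord F k x -> 0 <= ord F k y ->
  res F k (x * y) = res F k x * res F k y.
Proof. by move=> hx hy; rewrite res_mul // ?hx ?hy ?orbT. Qed.

Lemma res_neq0 x : x != 0 -> ord F k x = 0 -> res F k x != 0.
Proof. by move=> x0 o0; rewrite res_ker ?o0 ?lexx ?orbT // (negbTE x0) ltxx. Qed.

Lemma resV x : x != 0 -> ord F k x = 0 -> res F k x^-1 = (res F k x)^-1.
Proof.
move=> x0 o0; apply: (mulfI (res_neq0 _ x0 o0)).
rewrite -resM ?ordV ?o0 ?oppr0 // mulfV // mulfV ?res_neq0 //; exact: res_one.
Qed.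

Lemma resXn x n : x != 0 -> ord F k x = 0 -> res F k (x ^+ n) = res F k x ^+ n.
Proof.
move=> x0 o0; elim: n => [|n IH]; first by rewrite !expr0 res_one.
by rewrite !exprS resM ?o0 ?ordXn ?o0 ?mulr0 // IH.
Qed.

Lemma resX x (z : int) : x != 0 -> ord F k x = 0 -> res F k (x ^ z) = res F k x ^ z.
Proof.
move=> x0 o0; case: z => n; first exact: resXn.
by rewrite /exprz resV ?expf_neq0 ?ordXn ?o0 ?mulr0 // resXn.
Qed.

End Valuation.

Section TruncatedValuation.
Context {r : nat} {F : valued_flag r} {w : forall k, fld F k.+1}.
Hypothesis hw : is_params F w.

Lemma ord_normalize k (x : fld F k.+1) : (k < r)%N -> x != 0 ->
  w k ^ (- ord F k x) * x != 0 /\ ord F k (w k ^ (- ord F k x) * x) = 0.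
Proof.
move=> kr x0; have [w0 w1] := hw k kr.
split; first by rewrite mulf_neq0 ?expfz_neq0.
by rewrite ord_mul ?expfz_neq0 // ordX // w1 mulr1 addNr.
Qed.

Lemma nuseqM k (x y : fld F k) : (k <= r)%N -> x != 0 -> y != 0 -> forall t,
  nth 0 (nuseq F w k (x * y)) t = nth 0 (nuseq F w k x) t + nth 0 (nuseq F w k y) t.
Proof.
elim: k x y => [|k IH] x y kr x0 y0 [|t] /=; rewrite ?nth_nil ?addr0 ?ord_mul //.
have [nx ox] := ord_normalize _ _ kr x0; have [ny oy] := ord_normalize _ _ kr y0.
rewrite opprD expfzDr ?(hw k kr).1 // mulrACA resM ?ox ?oy // IH ?(ltnW kr) //;
  exact: res_neq0.
Qed.

Lemma nuseq1 k : (k <= r)%N -> forall t, nth 0 (nuseq F w k 1) t = 0.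
Proof.
move=> kr t; apply: (addIr (nth 0 (nuseq F w k 1) t)).
by rewrite -nuseqM ?oner_neq0 // mulr1 add0r.
Qed.

Lemma nuseqV k (x : fld F k) : (k <= r)%N -> x != 0 -> forall t,
  nth 0 (nuseq F w k x^-1) t = - nth 0 (nuseq F w k x) t.
Proof.
move=> kr x0 t; apply: (addrI (nth 0 (nuseq F w k x) t)).
by rewrite -nuseqM ?invr_eq0 // mulfV // nuseq1 // subrr.
Qed.

Lemma nuseqXn k (x : fld F k) n : (k <= r)%N -> x != 0 -> forall t,
  nth 0 (nuseq F w k (x ^+ n)) t = n%:Z * nth 0 (nuseq F w k x) t.
Proof.
move=> kr x0 t; elim: n => [|n IH]; first by rewrite expr0 nuseq1 // mul0r.
by rewrite exprS nuseqM ?expf_neq0 // IH intS mulrDl mul1r.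
Qed.

Lemma nuseqX k (x : fld F k) (z : int) : (k <= r)%N -> x != 0 -> forall t,
  nth 0 (nuseq F w k (x ^ z)) t = z * nth 0 (nuseq F w k x) t.
Proof.
move=> kr x0 t; case: z => n; first exact: nuseqXn.
by rewrite /exprz nuseqV ?expf_neq0 // nuseqXn // NegzE mulNr.
Qed.

End TruncatedValuation.

Section ChangeOfParameters.
Context {r : nat} {F : valued_flag r} {u v : forall k, fld F k.+1}.
Hypotheses (hu : is_params F u) (hv : is_params F v).

Lemma lam_neq0 k : (k < r)%N -> lam F u v k.+1 != 0.
Proof. by move=> kr; rewrite mulf_neq0 ?invr_eq0 ?(hu k kr).1 ?(hv k kr).1. Qed.

Lemma ord_lam k : (k < r)%N -> ord F k (lam F u v k.+1) = 0.
Proof.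
move=> kr; have [u0 u1] := hu k kr; have [v0 v1] := hv k kr.
by rewrite ord_mul ?invr_eq0 // ordV // u1 v1 subrr.
Qed.

(* Entry (s, t), 0-based, of M^v_u for the truncated flag Y_k ⊇ ... ⊇ Y_0. *)
Definition Mcoef (k s t : nat) : int :=
  if (s <= t)%N then nth 0 (nuseq F v (k - s) (lam F u v (k - s))) (t - s) else 0.

Lemma McoefSS k s t : Mcoef k.+1 s.+1 t.+1 = Mcoef k s t.
Proof. by rewrite /Mcoef ltnS subSS. Qed.

Lemma Mcoef0S k t : (k < r)%N ->
  Mcoef k.+1 0 t.+1 = nth 0 (nuseq F v k (res F k (lam F u v k.+1))) t.
Proof. by move=> kr; rewrite /Mcoef /= ord_lam // oppr0 expr0z mul1r. Qed.

Lemma nuseq_change_params k (x : fld F k) : (k <= r)%N -> x != 0 -> forall t,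
  nth 0 (nuseq F v k x) t =
    nth 0 (nuseq F u k x) t + \sum_(s < k) nth 0 (nuseq F u k x) s * Mcoef k s t.
Proof.
elim: k x => [|k IH] x kr x0 t; first by rewrite /= nth_nil big_ord0 addr0.
have [u0 _] := hu k kr; have [v0 _] := hv k kr.
have [y0 oy] := ord_normalize hu _ _ kr x0.
have v_by_u : v k ^ (- ord F k x) * x =
    lam F u v k.+1 ^ ord F k x * (u k ^ (- ord F k x) * x).
  rewrite /= expfzMl exprz_inv mulrA; congr (_ * _).
  by rewrite mulrAC -expfzDr // addrN expr0z mul1r.
rewrite big_ord_recl; case: t => [|t].
  by rewrite big1 => [|s _]; rewrite /Mcoef /= ?ord_lam ?mulr0 ?addr0.
under eq_bigr => s _ do rewrite McoefSS.
rewrite Mcoef0S //= -/(lam F u v k.+1).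
under eq_bigr => s _ do rewrite add0n.
have [l0 ol] := (lam_neq0 k kr, ord_lam k kr).
have rl0 := res_neq0 k kr _ l0 ol.
rewrite v_by_u resM ?ordX ?ol ?mulr0 ?oy // resX //.
rewrite nuseqM ?(ltnW kr) ?expfz_neq0 ?res_neq0 // nuseqX ?(ltnW kr) //.
by rewrite addrCA -IH ?(ltnW kr) ?res_neq0.
Qed.

Lemma Mcoef_eq0 k s t : (k <= r)%N -> (s < k)%N -> (t <= s)%N -> Mcoef k s t = 0.
Proof.
move=> kr sk; rewrite leq_eqVlt /Mcoef => /orP[/eqP-> | ts]; last by rewrite leqNgt ts.
have [m km] : exists m, (k - s = m.+1)%N by exists (k - s.+1)%N; rewrite subnSK.
rewrite leqnn subnn km; apply: ord_lam.
by rewrite -ltnS -km (leq_ltn_trans (leq_subr _ _)).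
Qed.

Lemma Mmat_Mcoef i j : Mmat F u v i j = Mcoef r i j.
Proof.
rewrite mxE /Mcoef subKn ?(ltnW (ltn_ord i)) // nth_cat size_nseq nth_nseq.
by case: leqP => h; rewrite ?if_same.
Qed.

Lemma nu_change_params f : f != 0 -> nu F v f = nu F u f *m Rmat F u v.
Proof.
move=> f0; apply/rowP => j.
rewrite mulmxDr mulmx1 !mxE (nuseq_change_params r) //; congr (_ + _).
by apply: eq_bigr => i _; rewrite Mmat_Mcoef mxE.
Qed.

Lemma det_Rmat : \det (Rmat F u v) = 1.
Proof.
rewrite -det_tr det_trig.
  by apply: big1 => i _; rewrite 2!mxE Mmat_Mcoef mxE Mcoef_eq0 ?eqxx ?addr0.
apply/is_trig_mxP => i j ij.
have /negbTE ji : j != i by rewrite -val_eqE gtn_eqF.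
by rewrite 2!mxE Mmat_Mcoef mxE ji Mcoef_eq0 ?(ltnW ij) ?addr0.
Qed.

End ChangeOfParameters.

Lemma mul_row_block_diag (R : pzRingType) p m n (x : 'M[R]_(p, m + n))
    (A : 'M_m) (B : 'M_n) :
  x *m block_mx A 0 0 B = row_mx (lsubmx x *m A) (rsubmx x *m B).
Proof. by rewrite -{1}(hsubmxK x) mul_row_block !mulmx0 addr0 add0r. Qed.

Lemma Gamma_change_params {r : nat} {F : valued_flag r} {u v : forall k, fld F k.+1} S :
  is_params F u -> is_params F v ->
  Gamma F v S = [set x *m Rtilde F u v | x in Gamma F u S].
Proof.
move=> hu hv; have nuR := nu_change_params hu hv.
apply/seteqP; split => x.
  case=> [->|[m [f [m1 Sf f0 ->]]]]; first by exists 0; [left | rewrite mul0mx].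
  exists (row_mx (m%:Z)%:M (nu F u f)); first by right; exists m, f.
  by rewrite mul_row_block_diag row_mxKl row_mxKr mulmx1 nuR.
case=> y [->|[m [f [m1 Sf f0 ->]]]] <-; first by left; rewrite mul0mx.
right; exists m, f; split => //.
by rewrite mul_row_block_diag row_mxKl row_mxKr mulmx1 nuR.
Qed.

Lemma mulmx_coord_bound {R : numDomainType} {m n : nat} (B : 'M[R]_(m, n)) :
  exists2 C : R, 0 < C & forall (x : 'rV[R]_m) e, 0 < e ->
    (forall i, `|x ord0 i| < e) -> forall j, `|(x *m B) ord0 j| < C * e.
Proof.
exists (1 + \sum_i \sum_j `|B i j|).
  by rewrite ltr_pwDl // sumr_ge0 // => i _; rewrite sumr_ge0.
move=> x e e0 hx j; rewrite mxE; apply: le_lt_trans (ler_norm_sum _ _ _) _.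
apply: (@le_lt_trans _ _ (e * \sum_i \sum_j `|B i j|)); last first.
  by rewrite [X in _ < X]mulrC ltr_pM2l // ltrDr.
rewrite mulr_sumr; apply: ler_sum => i _; rewrite normrM.
apply: (@le_trans _ _ (e * `|B i j|)); first by rewrite ler_wpM2r // ltW.
by rewrite ler_pM2l // (bigD1 j) //= lerDl sumr_ge0.
Qed.

Section ConvexGeometry.
Variables (R : realType) (r : nat).
Implicit Types (A : set 'rV[R]_r) (B : 'M[R]_r).

Lemma conv_hull_mulmx B A :
  [set x *m B | x in conv_hull R A] = conv_hull R [set x *m B | x in A].
Proof.
apply/seteqP; split => z.
  case=> x [n [w [p [w0 w1 Ap ->]]]] <-.
  exists n, w, (fun i => p i *m B); split => //; first by move=> i; exists (p i).
  by rewrite mulmx_suml; apply: eq_bigr => i _; rewrite scalemxAl.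
case=> n [w [q [w0 w1 Aq ->]]].
have /choice[p hp] : forall i, exists p, A p /\ p *m B = q i.
  by move=> i; have [p Ap <-] := Aq i; exists p.
exists (\sum_i w i *: p i); first by exists n, w, p; split => // i; case: (hp i).
by rewrite mulmx_suml; apply: eq_bigr => i _; rewrite -scalemxAl (hp i).2.
Qed.

Lemma rclosure_mulmx_sub B A :
  [set x *m B | x in rclosure R A] `<=` rclosure R [set x *m B | x in A].
Proof.
have [C C0 hC] := mulmx_coord_bound B.
move=> _ [x hx <-] e e0; have eC0 : 0 < e / C by rewrite divr_gt0.
have [y Ay hy] := hx _ eC0; exists (y *m B); first by exists y.
move=> j; have := hC (x - y) _ eC0 _ j.
rewrite [C * _]mulrC divfK ?gt_eqF // mulmxBl !mxE; apply.
by move=> i; rewrite !mxE.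
Qed.

Lemma rclosure_mulmx B A : B \in unitmx ->
  [set x *m B | x in rclosure R A] = rclosure R [set x *m B | x in A].
Proof.
move=> uB; apply/seteqP; split; first exact: rclosure_mulmx_sub.
move=> z hz; exists (z *m invmx B); last by rewrite mulmxKV.
have imK : [set y *m invmx B | y in [set x *m B | x in A]] = A.
  rewrite image_comp -[RHS]image_id; congr image.
  by apply: funext => x /=; rewrite mulmxK.
by rewrite -imK; apply: rclosure_mulmx_sub; exists z.
Qed.

End ConvexGeometry.

Definition slices (R : unitRingType) {r : nat} (G : set 'rV[int]_(1 + r)) :
    set 'rV[R]_r :=
  [set ((lsubmx x ord0 ord0)%:~R)^-1 *: map_mx (fun z : int => z%:~R) (rsubmx x)
    | x in [set x | G x /\ 1 <= lsubmx x ord0 ord0]].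

Lemma DeltaE (R : realType) r (F : valued_flag r) (u : forall k, fld F k.+1) S :
  Delta F R u S = rclosure R (conv_hull R (slices R (Gamma F u S))).
Proof. by []. Qed.

Lemma slices_mul_block_diag (R : unitRingType) r (G : set 'rV[int]_(1 + r))
    (B : 'M[int]_r) :
  slices R [set x *m block_mx 1%:M 0 0 B | x in G] =
    [set y *m map_mx (fun z : int => z%:~R) B | y in slices R G].
Proof.
have blockE x : x *m block_mx 1%:M 0 0 B = row_mx (lsubmx x) (rsubmx x *m B).
  by rewrite mul_row_block_diag mulmx1.
apply/seteqP; split => p.
  case=> _ [[x Gx <-] x1] <-; rewrite blockE row_mxKl row_mxKr in x1 *.
  exists (((lsubmx x ord0 ord0)%:~R)^-1 *: map_mx (fun z : int => z%:~R) (rsubmx x)).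
    by exists x.
  by rewrite map_mxM scalemxAl.
case=> _ [x [Gx x1] <-] <-.
exists (x *m block_mx 1%:M 0 0 B); first by split; [exists x | rewrite blockE row_mxKl].
by rewrite blockE row_mxKl row_mxKr map_mxM scalemxAl.
Qed.

Theorem corollary3p3 (R : realType) (r : nat) (F : valued_flag r)
  (u v : forall k, fld F k.+1) (S : nat -> set (fld F r)) :
  is_params F u -> is_params F v ->
  Gamma F v S = [set x *m Rtilde F u v | x in Gamma F u S] /\
  [set x *m map_mx (fun z : int => z%:~R) (Rmat F u v) | x in Delta F R u S]
    = Delta F R v S.
Proof.
move=> hu hv; have GammaE := Gamma_change_params S hu hv; split => //.
have unitR : map_mx (fun z : int => z%:~R : R) (Rmat F u v) \in unitmx.
  by rewrite unitmxE det_map_mx det_Rmat // rmorph1 unitr1.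
by rewrite !DeltaE rclosure_mulmx // conv_hull_mulmx GammaE slices_mul_block_diag.
Qed.
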